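(* (i) Let $\psi:\mathbb{Q}_p^n\to\mathbb{C}$ be a negative definite function such that, for every $j\in\mathbb{N}=\{0,1,2,\dots\}$, the function $\xi\mapsto[\psi(\xi)]^j$ is also negative definite. Then $\xi\mapsto e^{\psi(\xi)}$ is negative definite. (ii) Let $c_j\ge 0$ and $\alpha_j\in\mathbb{N}$ ($j\ge1$) be such that the real series $\sum_{j=1}^\infty c_j y^{\alpha_j}$ converges for all $y\ge 0$ and defines a non-constant function, and set $\psi_0(\xi):=\sum_{j=1}^\infty c_j\|\xi\|_p^{\alpha_j}$ for $\xi\in\mathbb{Q}_p^n$. Then for every integer $k\ge1$ the $k$-fold iterated exponential $$\xi\mapsto \underbrace{\exp(\exp(\cdots\exp}_{k\text{ times}}(\psi_0(\xi))\cdots))$$ is a continuous negative definite function on $\mathbb{Q}_p^n$.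
   Context: $p$ is a prime, $\mathbb{Q}_p$ the field of $p$-adic numbers with absolute value $|\cdot|_p$, and for $x=(x_1,\dots,x_n)\in\mathbb{Q}_p^n$, $\|x\|_p:=\max_i|x_i|_p$. A function $\psi:\mathbb{Q}_p^n\to\mathbb{C}$ is negative definite if for all $m\ge1$, all $x_1,\dots,x_m\in\mathbb{Q}_p^n$ and all $\lambda_1,\dots,\lambda_m\in\mathbb{C}$, $\sum_{i=1}^m\sum_{j=1}^m\big(\psi(x_i)+\overline{\psi(x_j)}-\psi(x_i-x_j)\big)\lambda_i\overline{\lambda_j}\ge0.$ *)

From Stdlib Require Import Reals Lra Lia ZArith Znumtheory ClassicalEpsilon.
From Stdlib Require Fin.
Open Scope R_scope.

Definition Cplx := (R * R)%type.
Definition C0 : Cplx := (0, 0).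
Definition C1 : Cplx := (1, 0).
Definition RtoC (x : R) : Cplx := (x, 0).
Definition Cadd (z w : Cplx) : Cplx := (fst z + fst w, snd z + snd w).
Definition Copp (z : Cplx) : Cplx := (- fst z, - snd z).
Definition Csub (z w : Cplx) : Cplx := Cadd z (Copp w).
Definition Cmul (z w : Cplx) : Cplx :=
  (fst z * fst w - snd z * snd w, fst z * snd w + snd z * fst w).
Definition Cconj (z : Cplx) : Cplx := (fst z, - snd z).
Definition Cexp (z : Cplx) : Cplx := (exp (fst z) * cos (snd z), exp (fst z) * sin (snd z)).
Fixpoint Cpow (z : Cplx) (j : nat) : Cplx :=
  match j with O => C1 | S j' => Cmul z (Cpow z j') end.
Fixpoint Csum (f : nat -> Cplx) (m : nat) : Cplx :=
  match m with O => C0 | S m' => Cadd (Csum f m') (f m') end.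
Definition Cnonneg (z : Cplx) : Prop := snd z = 0 /\ 0 <= fst z.

(* An element x of Q_p is represented by the sequence (r_k)_{k in nat},    *)
(* where r_k is the unique element of Z[1/p] /\ [0, p^k) with              *)
(* x = r_k mod p^k Z_p.  Q_p = lim_k Q_p/p^k Z_p = lim_k Z[1/p]/p^k Z.      *)
Definition is_Qp (p : Z) (r : nat -> R) : Prop :=
  forall k : nat,
    (exists (z : Z) (e : nat), r k * IZR p ^ e = IZR z) /\
    0 <= r k < IZR p ^ k /\
    (exists z : Z, r (S k) - r k = IZR z * IZR p ^ k).

Record Qp (p : Z) := mkQp { qp_seq : nat -> R; qp_ok : is_Qp p qp_seq }.
Arguments mkQp {p}.
Arguments qp_seq {p}.
Arguments qp_ok {p}.

Definition sub_seq (p : Z) (a b : nat -> R) (k : nat) : R :=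
  let d := a k - b k in
  if Rle_dec 0 d then d else d + IZR p ^ k.

Lemma sub_seq_ok (p : Z) (a b : nat -> R) :
  is_Qp p a -> is_Qp p b -> is_Qp p (sub_seq p a b).
Proof.
  intros Ha Hb k.
  destruct (Ha k) as [[za [ea Hea]] [[Ha0 Ha1] [A HA]]].
  destruct (Hb k) as [[zb [eb Heb]] [[Hb0 Hb1] [B HB]]].
  destruct (Ha (S k)) as [_ [[Ha0' Ha1'] _]].
  destruct (Hb (S k)) as [_ [[Hb0' Hb1'] _]].
  unfold sub_seq.
  split; [| split].
  - destruct (Rle_dec 0 (a k - b k)).
    + exists (za * p ^ Z.of_nat eb - zb * p ^ Z.of_nat ea)%Z, (ea + eb)%nat.
      rewrite minus_IZR, !mult_IZR, <- !pow_IZR, pow_add, <- Hea, <- Heb. ring.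
    + exists (za * p ^ Z.of_nat eb - zb * p ^ Z.of_nat ea
              + p ^ Z.of_nat (k + ea + eb))%Z, (ea + eb)%nat.
      rewrite plus_IZR, minus_IZR, !mult_IZR, <- !pow_IZR, !pow_add, <- Hea, <- Heb.
      ring.
  - destruct (Rle_dec 0 (a k - b k)); lra.
  - assert (HP : IZR p ^ S k = IZR p * IZR p ^ k) by reflexivity.
    destruct (Rle_dec 0 (a (S k) - b (S k)));
    destruct (Rle_dec 0 (a k - b k)).
    + exists (A - B)%Z.
      replace (a (S k)) with (a k + IZR A * IZR p ^ k) by lra.
      replace (b (S k)) with (b k + IZR B * IZR p ^ k) by lra.
      rewrite minus_IZR; ring.
    + exists (A - B - 1)%Z.
      replace (a (S k)) with (a k + IZR A * IZR p ^ k) by lra.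
      replace (b (S k)) with (b k + IZR B * IZR p ^ k) by lra.
      rewrite !minus_IZR; ring.
    + exists (A - B + p)%Z. rewrite HP.
      replace (a (S k)) with (a k + IZR A * IZR p ^ k) by lra.
      replace (b (S k)) with (b k + IZR B * IZR p ^ k) by lra.
      rewrite plus_IZR, minus_IZR; ring.
    + exists (A - B + p - 1)%Z. rewrite HP.
      replace (a (S k)) with (a k + IZR A * IZR p ^ k) by lra.
      replace (b (S k)) with (b k + IZR B * IZR p ^ k) by lra.
      rewrite minus_IZR, plus_IZR, minus_IZR; ring.
Qed.

Definition Qp_sub {p : Z} (x y : Qp p) : Qp p :=
  mkQp (sub_seq p (qp_seq x) (qp_seq y)) (sub_seq_ok p _ _ (qp_ok x) (qp_ok y)).

Definition in_pmZp {p : Z} (x : Qp p) (m : Z) : Prop :=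
  forall k : nat, (m <= Z.of_nat k)%Z ->
    exists z : Z, qp_seq x k = IZR z * powerRZ (IZR p) m.

(* p-adic absolute value: the unique t with t = 0 if x = 0 (x in every
   p^m Z_p) and t = p^(-v) where v is the valuation of x otherwise. *)
Definition Qp_abs {p : Z} (x : Qp p) : R :=
  epsilon (inhabits 0%R) (fun t =>
    ((forall m : Z, in_pmZp x m) /\ t = 0) \/
    (exists m : Z, in_pmZp x m /\ ~ in_pmZp x (m + 1) /\ t = powerRZ (IZR p) (- m))).

Definition Qpn (p : Z) (n : nat) := Fin.t n -> Qp p.

Definition Qpn_sub {p : Z} {n : nat} (x y : Qpn p n) : Qpn p n :=
  fun i => Qp_sub (x i) (y i).

Fixpoint maxF (n : nat) : (Fin.t n -> R) -> R :=
  match n with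
  | O => fun _ => 0
  | S n' => fun f => Rmax (f Fin.F1) (maxF n' (fun i => f (Fin.FS i)))
  end.

Definition Qpn_norm {p : Z} {n : nat} (x : Qpn p n) : R :=
  maxF n (fun i => Qp_abs (x i)).

Definition neg_def {p : Z} {n : nat} (psi : Qpn p n -> Cplx) : Prop :=
  forall (m : nat) (x : nat -> Qpn p n) (lam : nat -> Cplx),
    Cnonneg
      (Csum (fun i => Csum (fun j =>
         Cmul (Cmul (Csub (Cadd (psi (x i)) (Cconj (psi (x j))))
                          (psi (Qpn_sub (x i) (x j))))
                    (lam i))
              (Cconj (lam j))) m) m).

Definition Qpn_continuous {p : Z} {n : nat} (f : Qpn p n -> R) : Prop :=
  forall (x : Qpn p n) (eps : R), 0 < eps ->
    exists delta : R, 0 < delta /\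
      forall y : Qpn p n, Qpn_norm (Qpn_sub y x) < delta -> Rabs (f y - f x) < eps.

(* (i) Taking a single point in the defining form shows that every negative definite [f]
   has [2 Re f(xi) >= Re f(0) >= 0]; so all powers of [psi(xi)] have non-negative real part,
   and repeated squaring shows that such a complex number is real.  Then [exp psi] is the
   pointwise limit of the non-negative combinations [sum psi^j / j!] of negative definite
   functions.

   (ii) Each iterated exponential of [psi0] has the form [H(||xi||_p)] with [H] non-decreasing
   on [0, oo), [H(0) >= 0] and [H] right-continuous at [0].  As [||.||_p] is ultrametric,
   [H(||xi_i - xi_j||_p)] is an ultrametric kernel, and an ultrametric kernel is conditionally
   negative definite: merge a closest pair of points and induct on the number of points.
   Adjoining the point [0] turns this into negative definiteness of [H(||.||_p)].  Continuity
   holds because the norm is locally constant away from [0]. *)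

From Pilot Require Import Defs.
From Stdlib Require Import Reals ZArith Znumtheory Lra Lia Arith List Permutation
  ClassicalEpsilon Classical FunctionalExtensionality PropExtensionality.
Import ListNotations.
Open Scope R_scope.

Lemma Un_cv_const (c : R) : Un_cv (fun _ => c) c.
Proof. intros eps Heps. exists O. intros. unfold R_dist. rewrite Rminus_diag, Rabs_R0. exact Heps. Qed.

Definition lsum {A : Type} (f : A -> R) (l : list A) : R :=
  fold_right (fun a s => f a + s) 0 l.

Section ListSums.
Context {A : Type}.
Implicit Types (f g : A -> R) (l : list A).

Lemma lsum_app f l1 l2 : lsum f (l1 ++ l2) = lsum f l1 + lsum f l2.
Proof. induction l1 as [|a l1 IH]; simpl; [ring | rewrite IH; ring]. Qed.

Lemma lsum_ext f g l : (forall a, In a l -> f a = g a) -> lsum f l = lsum g l.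
Proof.
  induction l as [|a l IH]; intros H; simpl; [reflexivity|].
  rewrite H, IH; [reflexivity | intros; apply H |]; simpl; auto.
Qed.

Lemma lsum_plus f g l : lsum (fun a => f a + g a) l = lsum f l + lsum g l.
Proof. induction l as [|a l IH]; simpl; [ring | rewrite IH; ring]. Qed.

Lemma lsum_minus f g l : lsum (fun a => f a - g a) l = lsum f l - lsum g l.
Proof. induction l as [|a l IH]; simpl; [ring | rewrite IH; ring]. Qed.

Lemma lsum_scal c f l : lsum (fun a => c * f a) l = c * lsum f l.
Proof. induction l as [|a l IH]; simpl; [ring | rewrite IH; ring]. Qed.

Lemma lsum_perm f l l' : Permutation l l' -> lsum f l = lsum f l'.
Proof. induction 1; simpl; try congruence; ring. Qed.

Lemma lsum_cv (G : nat -> A -> R) g l :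
  (forall a, Un_cv (fun N => G N a) (g a)) -> Un_cv (fun N => lsum (G N) l) (lsum g l).
Proof.
  intros H. induction l as [|a l IH]; simpl.
  - apply Un_cv_const.
  - apply CV_plus; auto.
Qed.

End ListSums.

Lemma lsum_comm {A B : Type} (F : A -> B -> R) (l : list A) (l' : list B) :
  lsum (fun a => lsum (fun b => F a b) l') l = lsum (fun b => lsum (fun a => F a b) l) l'.
Proof.
  induction l as [|a l IH]; simpl.
  - induction l' as [|b l' IH']; simpl; [reflexivity | rewrite <- IH'; ring].
  - rewrite IH. symmetry. apply lsum_plus.
Qed.

Lemma lsum_if_eq (f g : nat -> R) (a : nat) (l : list nat) :
  NoDup l -> In a l ->
  lsum (fun i => if Nat.eq_dec i a then f i else g i) l = lsum g l + (f a - g a).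
Proof.
  induction l as [|b l IH]; intros Hnd Ha; [destruct Ha|].
  inversion_clear Hnd as [|? ? Hb Hl]. simpl.
  destruct (Nat.eq_dec b a) as [<-|Hba].
  - rewrite (lsum_ext _ g l); [ring|].
    intros i Hi. destruct (Nat.eq_dec i b); [subst; contradiction | reflexivity].
  - destruct Ha as [->|Ha]; [contradiction|]. rewrite IH by assumption. ring.
Qed.

Lemma list_argmin {A : Type} (f : A -> R) (l : list A) :
  l <> [] -> exists a, In a l /\ forall b, In b l -> f a <= f b.
Proof.
  induction l as [|a l IH]; intros Hne; [contradiction|].
  destruct l as [|a' l'].
  - exists a. split; [now left|]. intros b [<-|[]]. lra.
  - destruct IH as [c [Hc Hmin]]; [discriminate|].
    destruct (Rle_dec (f a) (f c)).
    + exists a. split; [now left|]. intros b [<-|Hb]; [lra|]. specialize (Hmin b Hb). lra.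
    + exists c. split; [now right|]. intros b [<-|Hb]; [lra|]. auto.
Qed.

(** * Ultrametric kernels *)

Definition qform (K : nat -> nat -> R) (w : nat -> R) (l : list nat) : R :=
  lsum (fun a => lsum (fun b => K a b * w a * w b) l) l.

Definition ultrametric_on (K : nat -> nat -> R) (l : list nat) : Prop :=
  forall a b c, In a l -> In b l -> In c l -> K a c <= Rmax (K a b) (K b c).

Definition diag_set (K : nat -> nat -> R) (a : nat) (d : R) (i j : nat) : R :=
  if Nat.eq_dec i a then if Nat.eq_dec j a then d else K i j else K i j.

Definition weight_add (w : nat -> R) (a : nat) (t : R) (i : nat) : R :=
  if Nat.eq_dec i a then w a + t else w i.

Section QuadraticForms.
Variable K : nat -> nat -> R.
Hypothesis K_sym : forall a b, K a b = K b a.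

Lemma qform_perm w l l' : Permutation l l' -> qform K w l = qform K w l'.
Proof.
  intros Hp. unfold qform. rewrite (lsum_perm _ _ _ Hp).
  apply lsum_ext. intros a _. apply lsum_perm, Hp.
Qed.

Lemma qform_cons w a l :
  qform K w (a :: l) = qform K w l + 2 * w a * lsum (fun b => K a b * w b) l + K a a * w a * w a.
Proof.
  unfold qform. simpl. rewrite lsum_plus.
  rewrite (lsum_ext (fun b => K b a * w b * w a) (fun b => w a * (K a b * w b))) by
    (intros; rewrite K_sym; ring).
  rewrite (lsum_ext (fun b => K a b * w a * w b) (fun b => w a * (K a b * w b))) by (intros; ring).
  rewrite !lsum_scal. ring.
Qed.

Lemma qform_diag_set w a d l : NoDup l -> In a l ->
  qform (diag_set K a d) w l = qform K w l + (d - K a a) * w a * w a.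
Proof.
  intros Hnd Ha. unfold qform, diag_set.
  rewrite (lsum_ext _ (fun i => if Nat.eq_dec i a
      then lsum (fun j => if Nat.eq_dec j a then d * w a * w a else K a j * w a * w j) l
      else lsum (fun j => K i j * w i * w j) l)).
  - rewrite lsum_if_eq, lsum_if_eq by assumption. ring.
  - intros i _. destruct (Nat.eq_dec i a) as [->|]; [|reflexivity].
    apply lsum_ext. intros j _. destruct (Nat.eq_dec j a) as [->|]; reflexivity.
Qed.

Lemma qform_weight_add w a t l : NoDup l -> In a l ->
  qform K (weight_add w a t) l =
  qform K w l + 2 * t * lsum (fun b => K a b * w b) l + t * t * K a a.
Proof.
  intros Hnd Ha. unfold qform.
  rewrite (lsum_ext _ (fun i => if Nat.eq_dec i a
      then (w a + t) * (lsum (fun j => K a j * w j) l + t * K a a)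
      else lsum (fun j => K i j * w i * w j) l + t * (K a i * w i))).
  - rewrite lsum_if_eq, lsum_plus, lsum_scal by assumption.
    assert (Hrow : lsum (fun j => K a j * w a * w j) l = w a * lsum (fun j => K a j * w j) l)
      by (rewrite <- lsum_scal; apply lsum_ext; intros; ring).
    rewrite Hrow. ring.
  - intros i _. unfold weight_add at 1. set (wi := if Nat.eq_dec i a then w a + t else w i).
    rewrite (lsum_ext _ (fun j => if Nat.eq_dec j a then K i j * wi * (w a + t) else K i j * wi * w j))
      by (intros j _; unfold weight_add; destruct (Nat.eq_dec j a) as [->|]; reflexivity).
    rewrite lsum_if_eq by assumption.
    assert (Hrow : lsum (fun j => K i j * wi * w j) l = wi * lsum (fun j => K i j * w j) l)
      by (rewrite <- lsum_scal; apply lsum_ext; intros; ring).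
    rewrite Hrow. unfold wi in *.
    destruct (Nat.eq_dec i a) as [->|]; [ring | rewrite (K_sym a i), Hrow; ring].
Qed.

Lemma qform_merge w a0 b0 l :
  NoDup (b0 :: l) -> In a0 l ->
  (forall c, In c l -> c <> a0 -> K b0 c = K a0 c) ->
  qform K w (b0 :: l) =
  qform (diag_set K a0 (K a0 b0)) (weight_add w a0 (w b0)) l
  + (K a0 a0 - K a0 b0) * w a0 * w a0 + (K b0 b0 - K a0 b0) * w b0 * w b0.
Proof.
  intros Hnd Ha0 Hrow. inversion_clear Hnd as [|? ? Hb0 Hl].
  rewrite qform_cons, qform_diag_set, qform_weight_add by assumption.
  assert (Hw : weight_add w a0 (w b0) a0 = w a0 + w b0)
    by (unfold weight_add; destruct (Nat.eq_dec a0 a0); [reflexivity | contradiction]).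
  assert (Hsum : lsum (fun c => K b0 c * w c) l =
                 lsum (fun c => K a0 c * w c) l + (K a0 b0 - K a0 a0) * w a0).
  { rewrite (lsum_ext _ (fun c => if Nat.eq_dec c a0 then K a0 b0 * w c else K a0 c * w c)).
    - rewrite lsum_if_eq by assumption. ring.
    - intros c Hc. destruct (Nat.eq_dec c a0) as [->|Hne]; [now rewrite K_sym | now rewrite Hrow]. }
  rewrite Hw, Hsum. ring.
Qed.

End QuadraticForms.

Lemma diag_set_sym K a d :
  (forall i j, K i j = K j i) -> forall i j, diag_set K a d i j = diag_set K a d j i.
Proof.
  intros HK i j. unfold diag_set.
  destruct (Nat.eq_dec i a), (Nat.eq_dec j a); subst; auto.
Qed.

Lemma ultrametric_on_diag_set K l a d :
  ultrametric_on K l -> (forall b, In b l -> b <> a -> d <= K a b) ->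
  ultrametric_on (diag_set K a d) l.
Proof.
  intros Hu Hd x y z Hx Hy Hz. unfold diag_set.
  destruct (Nat.eq_dec x a) as [->|], (Nat.eq_dec y a) as [->|], (Nat.eq_dec z a) as [->|];
    try apply Rmax_l; try apply Rmax_r; try (apply Hu; assumption).
  apply Rle_trans with (K a y); [apply Hd; assumption | apply Rmax_l].
Qed.

Lemma exists_min_pair (K : nat -> nat -> R) (l : list nat) a b :
  In a l -> In b l -> a <> b ->
  exists a0 b0, In a0 l /\ In b0 l /\ a0 <> b0 /\
    forall a b, In a l -> In b l -> a <> b -> K a0 b0 <= K a b.
Proof.
  intros Ha Hb Hab.
  set (pairs := filter (fun ab => negb (Nat.eqb (fst ab) (snd ab))) (list_prod l l)).
  assert (Hpairs : forall a b, In (a, b) pairs <-> In a l /\ In b l /\ a <> b).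
  { intros x y. unfold pairs. rewrite filter_In, in_prod_iff, Bool.negb_true_iff, Nat.eqb_neq.
    simpl. tauto. }
  destruct (list_argmin (fun ab => K (fst ab) (snd ab)) pairs) as [[a0 b0] [Hin Hmin]].
  - intros Hnil. assert (Hin : In (a, b) pairs) by (apply Hpairs; auto).
    rewrite Hnil in Hin. destruct Hin.
  - apply Hpairs in Hin as (? & ? & ?). exists a0, b0. repeat split; auto.
    intros x y Hx Hy Hxy. apply (Hmin (x, y)), Hpairs. auto.
Qed.

Lemma ultrametric_on_diag_le K l x y :
  (forall a b, K a b = K b a) -> ultrametric_on K l -> In x l -> In y l -> K x x <= K x y.
Proof.
  intros HK Hu Hx Hy. specialize (Hu x y x Hx Hy Hx).
  rewrite (HK y x), Rmax_left in Hu; lra.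
Qed.

Lemma ultrametric_on_isosceles K l a b c :
  (forall a b, K a b = K b a) -> ultrametric_on K l -> In a l -> In b l -> In c l ->
  K a b <= K a c -> K a b <= K b c -> K b c = K a c.
Proof.
  intros HK Hu Ha Hb Hc Hac Hbc.
  assert (H1 := Hu b a c Hb Ha Hc). assert (H2 := Hu a b c Ha Hb Hc).
  rewrite (HK b a), Rmax_right in H1 by assumption.
  rewrite Rmax_right in H2 by assumption. lra.
Qed.

(* Merging a closest pair [a0, b0] yields a family with one point less on which the
   kernel is still ultrametric, and changes the form by non-positive diagonal terms. *)
Theorem qform_ultrametric_nonpos (l : list nat) :
  forall (K : nat -> nat -> R) (w : nat -> R),
  (forall a b, K a b = K b a) -> NoDup l -> ultrametric_on K l ->
  lsum w l = 0 -> qform K w l <= 0.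
Proof.
  remember (length l) as n eqn:Hn. revert l Hn.
  induction n as [n IH] using lt_wf_ind. intros l Hn K w HK Hnd Hu Hw.
  destruct l as [|a [|b l'']].
  - unfold qform. simpl. lra.
  - unfold qform in *. simpl in *. assert (w a = 0) as -> by lra. lra.
  - assert (Hab : a <> b) by (intros ->; inversion_clear Hnd as [|? ? Ha _]; apply Ha; now left).
    set (l := a :: b :: l'') in *.
    destruct (exists_min_pair K l a b) as (a0 & b0 & Ha0 & Hb0 & Hab0 & Hmin);
      [now left | now right; left | exact Hab |].
    destruct (in_split b0 l Hb0) as (l1 & l2 & Hl). set (l' := l1 ++ l2).
    assert (Hperm : Permutation l (b0 :: l'))
      by (rewrite Hl; symmetry; apply Permutation_middle).
    assert (Hnd' : NoDup (b0 :: l')) by (eapply Permutation_NoDup; eassumption).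
    assert (Hincl : incl l' l)
      by (intros c Hc; apply (Permutation_in _ (Permutation_sym Hperm)); now right).
    assert (Ha0' : In a0 l')
      by (apply (Permutation_in _ Hperm) in Ha0 as [->|]; [contradiction | assumption]).
    assert (Hrow : forall c, In c l' -> c <> a0 -> K b0 c = K a0 c).
    { intros c Hc Hca.
      assert (c <> b0) by (intros ->; inversion_clear Hnd'; contradiction).
      apply (ultrametric_on_isosceles K l); auto; apply Hmin; auto. }
    assert (Hmerged : qform (diag_set K a0 (K a0 b0)) (weight_add w a0 (w b0)) l' <= 0).
    { apply (IH (length l')); [| reflexivity | apply diag_set_sym, HK | now inversion_clear Hnd' | |].
      - rewrite Hn, (Permutation_length Hperm). simpl. lia.
      - apply ultrametric_on_diag_set; [intros x y z Hx Hy Hz; apply Hu; auto |].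
        intros c Hc Hca. apply Hmin; auto.
      - unfold weight_add. rewrite lsum_if_eq by (now inversion_clear Hnd' || assumption).
        rewrite (lsum_perm _ _ _ Hperm) in Hw. simpl in Hw. lra. }
    rewrite (qform_perm K _ _ _ Hperm), (qform_merge K HK w a0 b0 l') by auto.
    assert (K a0 a0 <= K a0 b0) by (apply (ultrametric_on_diag_le K l); auto).
    assert (K b0 b0 <= K a0 b0) by (rewrite (HK a0 b0); apply (ultrametric_on_diag_le K l); auto).
    nra.
Qed.

(** * The p-adic absolute value and the norm of Q_p^n *)

Section PadicNorm.
Variable p : Z.
Hypothesis p_gt1 : (1 < p)%Z.
Local Notation P := (IZR p).

Lemma P_gt1 : 1 < P.
Proof. apply IZR_lt, p_gt1. Qed.

Lemma powerRZ_P_lt a b : (a < b)%Z -> powerRZ P a < powerRZ P b.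
Proof.
  intros H. generalize P_gt1; intros HP.
  rewrite !powerRZ_Rpower by lra. apply Rpower_lt; [lra | apply IZR_lt, H].
Qed.

Lemma powerRZ_P_le a b : (a <= b)%Z -> powerRZ P a <= powerRZ P b.
Proof.
  intros H. destruct (Z.eq_dec a b) as [->|]; [lra|].
  left. apply powerRZ_P_lt. lia.
Qed.

Lemma powerRZ_P_multiple m m' : (m' <= m)%Z -> exists z : Z, powerRZ P m = IZR z * powerRZ P m'.
Proof.
  intros H. exists (p ^ Z.of_nat (Z.to_nat (m - m')))%Z.
  rewrite <- pow_IZR, pow_powerRZ, <- powerRZ_add by (generalize P_gt1; lra).
  f_equal. rewrite Z2Nat.id; lia.
Qed.

Lemma pow_P_multiple (k : nat) m : (m <= Z.of_nat k)%Z -> exists z : Z, P ^ k = IZR z * powerRZ P m.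
Proof. rewrite pow_powerRZ. apply powerRZ_P_multiple. Qed.

Lemma sub_seq_cong (a b : nat -> R) k : exists e : Z, sub_seq p a b k = a k - b k + IZR e * P ^ k.
Proof.
  unfold sub_seq. destruct (Rle_dec 0 (a k - b k)); [exists 0%Z | exists 1%Z]; ring.
Qed.

Lemma qp_seq_cong (x : Qp p) k d : exists z : Z, qp_seq x (k + d) - qp_seq x k = IZR z * P ^ k.
Proof.
  induction d as [|d [z Hz]].
  - exists 0%Z. rewrite Nat.add_0_r. ring.
  - destruct (qp_ok x (k + d)%nat) as (_ & _ & z' & Hz').
    exists (z + z' * p ^ Z.of_nat d)%Z.
    rewrite Nat.add_succ_r, plus_IZR, mult_IZR, <- pow_IZR.
    rewrite pow_add in Hz'. lra.
Qed.

(* The last hypothesis says that [c = s1 a + s2 b], computed digitwise modulo [p^k]. *)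
Lemma in_pmZp_combine (c a b : Qp p) m (s1 s2 : Z) :
  in_pmZp a m -> in_pmZp b m ->
  (forall k, exists e : Z, qp_seq c k = IZR s1 * qp_seq a k + IZR s2 * qp_seq b k + IZR e * P ^ k) ->
  in_pmZp c m.
Proof.
  intros Ha Hb H k Hk.
  destruct (Ha k Hk) as [za Ea], (Hb k Hk) as [zb Eb], (H k) as [e Ee].
  destruct (pow_P_multiple k m Hk) as [z Ez].
  exists (s1 * za + s2 * zb + e * z)%Z. rewrite Ee, Ea, Eb, Ez, !plus_IZR, !mult_IZR. ring.
Qed.

Lemma in_pmZp_sub_trans (a b c : Qp p) m :
  in_pmZp (Qp_sub a b) m -> in_pmZp (Qp_sub b c) m -> in_pmZp (Qp_sub a c) m.
Proof.
  intros H1 H2. apply (in_pmZp_combine _ _ _ m 1 1 H1 H2). intros k. simpl.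
  destruct (sub_seq_cong (qp_seq a) (qp_seq c) k) as [e1 ->].
  destruct (sub_seq_cong (qp_seq a) (qp_seq b) k) as [e2 ->].
  destruct (sub_seq_cong (qp_seq b) (qp_seq c) k) as [e3 ->].
  exists (e1 - e2 - e3)%Z. rewrite !minus_IZR. ring.
Qed.

Lemma in_pmZp_sub_sym (a b : Qp p) m : in_pmZp (Qp_sub a b) m -> in_pmZp (Qp_sub b a) m.
Proof.
  intros H. apply (in_pmZp_combine _ _ _ m (-1) 0 H H). intros k. simpl.
  destruct (sub_seq_cong (qp_seq b) (qp_seq a) k) as [e1 ->].
  destruct (sub_seq_cong (qp_seq a) (qp_seq b) k) as [e2 ->].
  exists (e1 + e2)%Z. rewrite !plus_IZR. ring.
Qed.

Lemma in_pmZp_mono (x : Qp p) m m' : in_pmZp x m -> (m' <= m)%Z -> in_pmZp x m'.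
Proof.
  intros H Hm k Hk.
  set (K := Nat.max k (Z.to_nat m)).
  destruct (H K ltac:(unfold K; lia)) as [zK EK].
  destruct (qp_seq_cong x k (K - k)) as [z Ez].
  replace (k + (K - k))%nat with K in Ez by (unfold K; lia).
  destruct (pow_P_multiple k m' Hk) as [z1 E1].
  destruct (powerRZ_P_multiple m m' Hm) as [z2 E2].
  exists (zK * z2 - z * z1)%Z. rewrite minus_IZR, !mult_IZR.
  replace (qp_seq x k) with (qp_seq x K - IZR z * P ^ k) by lra.
  rewrite EK, E1, E2. ring.
Qed.

Lemma in_pmZp_some (x : Qp p) : exists m, in_pmZp x m.
Proof.
  destruct (qp_ok x O) as [[z0 [e He]] _].
  exists (- Z.of_nat e)%Z. intros k _.
  destruct (qp_seq_cong x O k) as [z Ez]. simpl in Ez.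
  assert (Hinv : P ^ e * powerRZ P (- Z.of_nat e) = 1).
  { rewrite pow_powerRZ, <- powerRZ_add by (generalize P_gt1; lra).
    rewrite Z.add_opp_diag_r. reflexivity. }
  exists (z0 + z * p ^ Z.of_nat e)%Z.
  rewrite plus_IZR, mult_IZR, <- pow_IZR, Rmult_plus_distr_r, <- He.
  rewrite Rmult_assoc, Rmult_assoc, Hinv. lra.
Qed.

Lemma Qp_abs_spec (x : Qp p) :
  ((forall m, in_pmZp x m) /\ Qp_abs x = 0) \/
  (exists m, in_pmZp x m /\ ~ in_pmZp x (m + 1) /\ Qp_abs x = powerRZ P (- m)).
Proof.
  pattern (Qp_abs x). apply epsilon_spec.
  destruct (classic (forall m, in_pmZp x m)) as [Hall|Hnot]; [exists 0; now left|].
  apply not_all_ex_not in Hnot as [m1 Hm1].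
  destruct (in_pmZp_some x) as [m0 Hm0].
  destruct (classic (exists m, in_pmZp x m /\ ~ in_pmZp x (m + 1))) as [[m Hm]|Hstep].
  - exists (powerRZ P (- m)). right. exists m. tauto.
  - exfalso. apply Hm1.
    assert (Hup : forall d : nat, in_pmZp x (m0 + Z.of_nat d)).
    { induction d as [|d IH]; [now rewrite Z.add_0_r|].
      apply NNPP. intros Hd. apply Hstep. exists (m0 + Z.of_nat d)%Z.
      split; [assumption|]. now replace (m0 + Z.of_nat d + 1)%Z with (m0 + Z.of_nat (S d))%Z by lia. }
    apply (in_pmZp_mono _ _ _ (Hup (Z.to_nat (m1 - m0)))). lia.
Qed.

Lemma Qp_abs_ext (a b : Qp p) : (forall m, in_pmZp a m <-> in_pmZp b m) -> Qp_abs a = Qp_abs b.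
Proof.
  intros H. assert (E : in_pmZp a = in_pmZp b)
    by (extensionality m; apply propositional_extensionality, H).
  unfold Qp_abs. rewrite E. reflexivity.
Qed.

Lemma Qp_abs_le_of_in (x : Qp p) m : in_pmZp x m -> Qp_abs x <= powerRZ P (- m).
Proof.
  intros H. destruct (Qp_abs_spec x) as [[_ ->]|(v & Hv & Hv1 & ->)].
  - apply powerRZ_le. generalize P_gt1; lra.
  - apply powerRZ_P_le. enough (m <= v)%Z by lia.
    apply Z.nlt_ge. intros Hlt. apply Hv1, (in_pmZp_mono _ _ _ H). lia.
Qed.

Lemma in_of_Qp_abs_le (x : Qp p) m : Qp_abs x <= powerRZ P (- m) -> in_pmZp x m.
Proof.
  intros H. destruct (Qp_abs_spec x) as [[Hall _]|(v & Hv & _ & E)]; [apply Hall|].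
  apply (in_pmZp_mono _ _ _ Hv). rewrite E in H.
  apply Z.nlt_ge. intros Hlt. assert (powerRZ P (- m) < powerRZ P (- v)) by (apply powerRZ_P_lt; lia). lra.
Qed.

Lemma Qp_abs_of_in_all (x : Qp p) : (forall m, in_pmZp x m) -> Qp_abs x = 0.
Proof.
  intros H. destruct (Qp_abs_spec x) as [[_ E]|(v & _ & Hv1 & _)]; [exact E|].
  contradiction (Hv1 (H (v + 1)%Z)).
Qed.

(* [Rmax] of two absolute values is [0] or some [p^-m]; either way, bounds [p^m Z_p] on both
   differences transfer to [a - c]. *)
Lemma Qp_abs_sub_ultra (a b c : Qp p) :
  Qp_abs (Qp_sub a c) <= Rmax (Qp_abs (Qp_sub a b)) (Qp_abs (Qp_sub b c)).
Proof.
  set (M := Rmax _ _).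
  assert (Hin : forall m, M <= powerRZ P (- m) -> in_pmZp (Qp_sub a c) m).
  { intros m Hm. apply (in_pmZp_sub_trans a b c); apply in_of_Qp_abs_le;
      eapply Rle_trans; [apply Rmax_l | exact Hm | apply Rmax_r | exact Hm]. }
  assert (HM : M = 0 \/ exists m, M = powerRZ P (- m)).
  { unfold M. apply Rmax_case;
      match goal with |- context [Qp_abs ?x] =>
        destruct (Qp_abs_spec x) as [[_ ->]|(m & _ & _ & ->)]; [now left | right; now exists m] end. }
  destruct HM as [HM|[m HM]].
  - rewrite HM, Qp_abs_of_in_all; [lra|]. intros m. apply Hin. rewrite HM.
    apply powerRZ_le. generalize P_gt1; lra.
  - rewrite HM. apply Qp_abs_le_of_in, Hin. lra.
Qed.

Lemma Qp_abs_sub_sym (a b : Qp p) : Qp_abs (Qp_sub a b) = Qp_abs (Qp_sub b a).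
Proof. apply Qp_abs_ext. split; apply in_pmZp_sub_sym. Qed.

Lemma Qp_zero_ok : is_Qp p (fun _ => 0).
Proof.
  intros k. repeat split.
  - exists 0%Z, O. ring.
  - lra.
  - apply pow_lt. generalize P_gt1; lra.
  - exists 0%Z. ring.
Qed.

Definition Qp_zero : Qp p := mkQp (fun _ => 0) Qp_zero_ok.

Lemma Qp_ext (a b : Qp p) : (forall k, qp_seq a k = qp_seq b k) -> a = b.
Proof.
  destruct a as [sa Ha], b as [sb Hb]. simpl. intros H.
  assert (sa = sb) as <- by (extensionality k; apply H).
  f_equal. apply proof_irrelevance.
Qed.

Lemma Qp_sub_diag (a : Qp p) : Qp_sub a a = Qp_zero.
Proof.
  apply Qp_ext. intros k. simpl. unfold sub_seq.
  rewrite Rminus_diag. destruct (Rle_dec 0 0); lra.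
Qed.

Lemma Qp_sub_zero_r (a : Qp p) : Qp_sub a Qp_zero = a.
Proof.
  apply Qp_ext. intros k. simpl. unfold sub_seq.
  destruct (qp_ok a k) as (_ & [Hk _] & _).
  rewrite Rminus_0_r. destruct (Rle_dec 0 (qp_seq a k)); lra.
Qed.

End PadicNorm.

Lemma maxF_nonneg n f : 0 <= maxF n f.
Proof.
  revert f; induction n as [|n IH]; intros f; simpl; [lra|].
  eapply Rle_trans; [apply IH | apply Rmax_r].
Qed.

Lemma maxF_ge n f (i : Fin.t n) : f i <= maxF n f.
Proof.
  revert f i; induction n as [|n IH]; intros f i; [inversion i|].
  apply (Fin.caseS' i (fun i => f i <= maxF (S n) f)); simpl.
  - apply Rmax_l.
  - intros j. eapply Rle_trans; [apply (IH (fun i => f (Fin.FS i)) j) | apply Rmax_r].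
Qed.

Lemma maxF_lub n f M : 0 <= M -> (forall i, f i <= M) -> maxF n f <= M.
Proof.
  revert f; induction n as [|n IH]; intros f HM H; simpl; [assumption|].
  apply Rmax_lub; auto.
Qed.

Section QpnNorm.
Variables (p : Z) (n : nat).
Hypothesis p_gt1 : (1 < p)%Z.

Definition Qpn_zero : Qpn p n := fun _ => Qp_zero p p_gt1.

Lemma Qpn_sub_diag (y : Qpn p n) : Qpn_sub y y = Qpn_zero.
Proof. extensionality i. apply Qp_sub_diag. Qed.

Lemma Qpn_sub_zero_r (y : Qpn p n) : Qpn_sub y Qpn_zero = y.
Proof. extensionality i. apply Qp_sub_zero_r. Qed.

Lemma Qpn_norm_nonneg (x : Qpn p n) : 0 <= Qpn_norm x.
Proof. apply maxF_nonneg. Qed.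

Lemma Qpn_norm_sub_sym (a b : Qpn p n) : Qpn_norm (Qpn_sub a b) = Qpn_norm (Qpn_sub b a).
Proof.
  unfold Qpn_norm, Qpn_sub. f_equal. extensionality i. apply Qp_abs_sub_sym, p_gt1.
Qed.

Lemma Qpn_norm_sub_ultra (a b c : Qpn p n) :
  Qpn_norm (Qpn_sub a c) <= Rmax (Qpn_norm (Qpn_sub a b)) (Qpn_norm (Qpn_sub b c)).
Proof.
  apply maxF_lub; [eapply Rle_trans; [apply Qpn_norm_nonneg | apply Rmax_l]|].
  intros i. eapply Rle_trans; [apply (Qp_abs_sub_ultra p p_gt1 (a i) (b i) (c i))|].
  apply Rmax_lub.
  - eapply Rle_trans; [|apply Rmax_l]. apply (maxF_ge n (fun i => Qp_abs (Qpn_sub a b i))).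
  - eapply Rle_trans; [|apply Rmax_r]. apply (maxF_ge n (fun i => Qp_abs (Qpn_sub b c i))).
Qed.

Lemma Qpn_norm_le_max (x y : Qpn p n) : Qpn_norm y <= Rmax (Qpn_norm (Qpn_sub y x)) (Qpn_norm x).
Proof.
  rewrite <- (Qpn_sub_zero_r y) at 1. rewrite <- (Qpn_sub_zero_r x) at 2.
  apply Qpn_norm_sub_ultra.
Qed.

Lemma Qpn_norm_eq_of_sub_lt (x y : Qpn p n) :
  Qpn_norm (Qpn_sub y x) < Qpn_norm x -> Qpn_norm y = Qpn_norm x.
Proof.
  intros H. assert (H1 := Qpn_norm_le_max x y). assert (H2 := Qpn_norm_le_max y x).
  rewrite Qpn_norm_sub_sym in H2. unfold Rmax in *.
  destruct (Rle_dec _ _) in H1; destruct (Rle_dec _ _) in H2; lra.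
Qed.

End QpnNorm.

Lemma Csum_fst f m : fst (Csum f m) = lsum (fun i => fst (f i)) (seq 0 m).
Proof.
  induction m as [|m IH]; [reflexivity|].
  rewrite seq_S, lsum_app. simpl. rewrite IH. ring.
Qed.

Lemma Csum_snd f m : snd (Csum f m) = lsum (fun i => snd (f i)) (seq 0 m).
Proof.
  induction m as [|m IH]; [reflexivity|].
  rewrite seq_S, lsum_app. simpl. rewrite IH. ring.
Qed.

Section RealNegDef.
Context {p : Z} {n : nat}.

Definition kern (g : Qpn p n -> R) (x : nat -> Qpn p n) (i j : nat) : R :=
  g (x i) + g (x j) - g (Qpn_sub (x i) (x j)).

Definition kform (g : Qpn p n -> R) (m : nat) (x : nat -> Qpn p n) (W : nat -> nat -> R) : R :=
  lsum (fun i => lsum (fun j => kern g x i j * W i j) (seq 0 m)) (seq 0 m).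

Definition re_weight (lam : nat -> Cplx) (i j : nat) : R :=
  fst (lam i) * fst (lam j) + snd (lam i) * snd (lam j).

Definition im_weight (lam : nat -> Cplx) (i j : nat) : R :=
  snd (lam i) * fst (lam j) - fst (lam i) * snd (lam j).

Lemma neg_def_real_iff (g : Qpn p n -> R) :
  neg_def (fun xi => RtoC (g xi)) <->
  forall m x lam, kform g m x (im_weight lam) = 0 /\ 0 <= kform g m x (re_weight lam).
Proof.
  assert (Hform : forall m x lam,
    let z := Csum (fun i => Csum (fun j =>
         Cmul (Cmul (Csub (Cadd (RtoC (g (x i))) (Cconj (RtoC (g (x j)))))
                          (RtoC (g (Qpn_sub (x i) (x j)))))
                    (lam i))
              (Cconj (lam j))) m) m in
    fst z = kform g m x (re_weight lam) /\ snd z = kform g m x (im_weight lam)).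
  { intros m x lam. simpl. rewrite Csum_fst, Csum_snd. unfold kform.
    split; apply lsum_ext; intros i _; rewrite ?Csum_fst, ?Csum_snd; apply lsum_ext; intros j _;
      unfold kern, re_weight, im_weight; simpl; ring. }
  unfold neg_def, Cnonneg.
  split; intros H m x lam; destruct (Hform m x lam) as [Hre Him]; specialize (H m x lam);
    [rewrite <- Hre, <- Him | rewrite Hre, Him]; tauto.
Qed.

Lemma kform_plus g h m x W : kform (fun xi => g xi + h xi) m x W = kform g m x W + kform h m x W.
Proof.
  unfold kform. rewrite <- lsum_plus. apply lsum_ext; intros i _.
  rewrite <- lsum_plus. apply lsum_ext; intros j _. unfold kern. ring.
Qed.

Lemma kform_scal c g m x W : kform (fun xi => c * g xi) m x W = c * kform g m x W.
Proof.
  unfold kform. rewrite <- lsum_scal. apply lsum_ext; intros i _.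
  rewrite <- lsum_scal. apply lsum_ext; intros j _. unfold kern. ring.
Qed.

Lemma kform_cv (G : nat -> Qpn p n -> R) g m x W :
  (forall xi, Un_cv (fun N => G N xi) (g xi)) ->
  Un_cv (fun N => kform (G N) m x W) (kform g m x W).
Proof.
  intros H. unfold kform. apply lsum_cv. intros i. apply lsum_cv. intros j.
  unfold kern. apply CV_mult; [|apply Un_cv_const].
  apply CV_minus; [apply CV_plus|]; apply H.
Qed.

Lemma neg_def_real_series (h : nat -> Qpn p n -> R) (a : nat -> R) (g : Qpn p n -> R) :
  (forall k, neg_def (fun xi => RtoC (h k xi))) -> (forall k, 0 <= a k) ->
  (forall xi, Un_cv (fun N => sum_f_R0 (fun k => a k * h k xi) N) (g xi)) ->
  neg_def (fun xi => RtoC (g xi)).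
Proof.
  intros Hh Ha Hcv. apply neg_def_real_iff. intros m x lam.
  assert (Hpartial : forall W N,
    kform (fun xi => sum_f_R0 (fun k => a k * h k xi) N) m x W =
    sum_f_R0 (fun k => a k * kform (h k) m x W) N).
  { intros W N. induction N as [|N IH]; simpl; [apply kform_scal|].
    rewrite kform_plus, kform_scal, IH. reflexivity. }
  split.
  - apply (UL_sequence (fun N => kform (fun xi => sum_f_R0 (fun k => a k * h k xi) N) m x (im_weight lam))).
    + apply kform_cv, Hcv.
    + eapply Un_cv_ext; [|apply Un_cv_const]. intros N. rewrite Hpartial.
      symmetry. apply sum_eq_R0. intros k _.
      rewrite (proj1 (proj1 (neg_def_real_iff _) (Hh k) m x lam)). ring.
  - eapply Rle_cv_lim; [|apply Un_cv_const | apply kform_cv, Hcv].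
    intros N. simpl. rewrite Hpartial. apply cond_pos_sum. intros k.
    apply Rmult_le_pos; [apply Ha | apply (proj1 (neg_def_real_iff _) (Hh k))].
Qed.

End RealNegDef.

(** * Exponentials of negative definite functions *)

Lemma neg_def_diag {p : Z} {n : nat} (f : Qpn p n -> Cplx) :
  neg_def f -> forall z, fst (f (Qpn_sub z z)) <= 2 * fst (f z).
Proof.
  intros H z. destruct (H 1%nat (fun _ => z) (fun _ => Defs.C1)) as [_ Hz]. simpl in Hz. lra.
Qed.

Lemma neg_def_re_nonneg {p : Z} {n : nat} (f : Qpn p n -> Cplx) :
  (1 < p)%Z -> neg_def f -> forall y, 0 <= fst (f y).
Proof.
  intros Hp H y.
  assert (H0 := neg_def_diag f H (Qpn_zero p n Hp)).
  assert (Hy := neg_def_diag f H y).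
  rewrite (Qpn_sub_diag p n Hp) in H0, Hy. lra.
Qed.

(* [q k] below is [sin^2] of the argument of [s k]: squaring doubles the argument, so while
   the real part stays non-negative [q] at least doubles, which a quantity bounded by [1]
   can only do if it is [0]. *)
Lemma square_iterates_real (s : nat -> Cplx) :
  (forall k, s (S k) = Cmul (s k) (s k)) -> (forall k, 0 <= fst (s k)) -> snd (s O) = 0.
Proof.
  intros Hs Hre.
  set (x k := fst (s k)). set (y k := snd (s k)). set (rho k := x k ^ 2 + y k ^ 2).
  destruct (Req_dec (y O) 0) as [|Hy0]; [assumption | exfalso].
  assert (Hx : forall k, x (S k) = x k ^ 2 - y k ^ 2)
    by (intros k; unfold x, y; rewrite Hs; simpl; ring).
  assert (Hy : forall k, y (S k) = 2 * x k * y k)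
    by (intros k; unfold x, y; rewrite Hs; simpl; ring).
  assert (Hrho : forall k, rho (S k) = rho k ^ 2) by (intros k; unfold rho; rewrite Hx, Hy; ring).
  assert (Hpos : forall k, 0 < rho k).
  { induction k as [|k IH]; [unfold rho; nra | rewrite Hrho; nra]. }
  set (q k := y k ^ 2 / rho k).
  assert (Hdouble : forall k, 2 * q k <= q (S k)).
  { intros k. assert (Hxk : y k ^ 2 <= x k ^ 2)
      by (specialize (Hre (S k)); fold (x (S k)) in Hre; rewrite Hx in Hre; lra).
    assert (E : q (S k) - 2 * q k = 2 * y k ^ 2 * (x k ^ 2 - y k ^ 2) / rho k ^ 2).
    { unfold q. rewrite Hy, Hrho. specialize (Hpos k). unfold rho in *. field. lra. }
    assert (0 <= 2 * y k ^ 2 * (x k ^ 2 - y k ^ 2) / rho k ^ 2).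
    { specialize (Hpos k). unfold Rdiv. apply Rmult_le_pos; [nra | left; apply Rinv_0_lt_compat; nra]. }
    lra. }
  assert (Hgrow : forall k, 2 ^ k * q O <= q k).
  { induction k as [|k IH]; simpl; [lra|]. specialize (Hdouble k). lra. }
  assert (Hle1 : forall k, q k <= 1).
  { intros k. specialize (Hpos k). unfold q. apply Rmult_le_reg_r with (rho k); [assumption|].
    unfold Rdiv. rewrite Rmult_assoc, Rinv_l by lra. unfold rho. nra. }
  assert (Hq0 : 0 < q O) by (specialize (Hpos O); unfold q; apply Rdiv_lt_0_compat; nra).
  destruct (Pow_x_infinity 2 ltac:(rewrite Rabs_pos_eq; lra) (/ q O + 1)) as [N HN].
  specialize (HN N (le_n _)). rewrite Rabs_pos_eq in HN by (apply pow_le; lra).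
  specialize (Hgrow N). specialize (Hle1 N).
  assert (/ q O * q O = 1) by (field; lra). nra.
Qed.

Lemma Cpow_add z a b : Cpow z (a + b) = Cmul (Cpow z a) (Cpow z b).
Proof.
  induction a as [|a IH]; simpl.
  - destruct (Cpow z b); unfold Cmul, Defs.C1; simpl; f_equal; ring.
  - rewrite IH. destruct z, (Cpow _ a), (Cpow _ b); unfold Cmul; simpl; f_equal; ring.
Qed.

Lemma re_pow_nonneg_real (z : Cplx) : (forall j, 0 <= fst (Cpow z j)) -> snd z = 0.
Proof.
  intros H.
  assert (Hs := square_iterates_real (fun k => Cpow z (2 ^ k))).
  replace (snd z) with (snd (Cpow z (2 ^ 0)))
    by (destruct z; simpl; unfold Cmul, Defs.C1; simpl; f_equal; ring).
  apply Hs; [|intros; apply H].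
  intros k. rewrite <- Cpow_add. f_equal. simpl. lia.
Qed.

Lemma Cpow_RtoC t j : Cpow (RtoC t) j = RtoC (t ^ j).
Proof.
  induction j as [|j IH]; [reflexivity|]. simpl. rewrite IH. unfold Cmul, RtoC. simpl. f_equal; ring.
Qed.

Lemma Cexp_RtoC t : Cexp (RtoC t) = RtoC (exp t).
Proof. unfold Cexp, RtoC. simpl. rewrite cos_0, sin_0. f_equal; ring. Qed.

Theorem neg_def_exp (p : Z) (n : nat) (psi : Qpn p n -> Cplx) :
  (1 < p)%Z -> (forall j, neg_def (fun xi => Cpow (psi xi) j)) ->
  neg_def (fun xi => Cexp (psi xi)).
Proof.
  intros Hp Hpow.
  assert (Hpsi : forall xi, psi xi = RtoC (fst (psi xi))).
  { intros xi. assert (Him : snd (psi xi) = 0).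
    { apply re_pow_nonneg_real. intros j. apply (neg_def_re_nonneg _ Hp (Hpow j)). }
    unfold RtoC. rewrite <- Him. destruct (psi xi); reflexivity. }
  replace (fun xi => Cexp (psi xi)) with (fun xi => RtoC (exp (fst (psi xi))))
    by (extensionality xi; rewrite <- Cexp_RtoC, <- Hpsi; reflexivity).
  apply (neg_def_real_series (fun k xi => fst (psi xi) ^ k) (fun k => / INR (fact k))).
  - intros k. replace (fun xi => RtoC (fst (psi xi) ^ k)) with (fun xi => Cpow (psi xi) k)
      by (extensionality xi; rewrite <- Cpow_RtoC, <- Hpsi; reflexivity).
    apply Hpow.
  - intros k. left. apply Rinv_0_lt_compat, lt_0_INR, lt_O_fact.
  - intros xi. apply E1_cvg.
Qed.

(** * Radial functions of the p-adic norm *)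

Lemma lsum2_antisym (F : nat -> nat -> R) l :
  (forall i j, F i j = - F j i) -> lsum (fun i => lsum (fun j => F i j) l) l = 0.
Proof.
  intros HF.
  assert (E : lsum (fun i => lsum (fun j => F i j) l) l =
              lsum (fun j => -1 * lsum (fun i => F j i) l) l).
  { rewrite lsum_comm. apply lsum_ext; intros j _.
    rewrite <- lsum_scal. apply lsum_ext; intros i _. rewrite HF. ring. }
  rewrite lsum_scal in E.
  lra.
Qed.

Lemma lsum2_kern_split (A : nat -> R) (B : nat -> nat -> R) (u : nat -> R) l :
  lsum (fun i => lsum (fun j => (A i + A j - B i j) * (u i * u j)) l) l =
  2 * lsum (fun i => A i * u i) l * lsum u l - lsum (fun i => lsum (fun j => B i j * u i * u j) l) l.
Proof.
  rewrite (lsum_ext _ (fun i => A i * u i * lsum u l + u i * lsum (fun j => A j * u j) l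
                               - lsum (fun j => B i j * u i * u j) l)).
  - rewrite lsum_minus, lsum_plus.
    rewrite (lsum_ext (fun i => A i * u i * _) (fun i => lsum u l * (A i * u i))) by (intros; ring).
    rewrite (lsum_ext (fun i => u i * _) (fun i => lsum (fun j => A j * u j) l * u i)) by (intros; ring).
    rewrite !lsum_scal. ring.
  - intros i _. rewrite <- !lsum_scal, <- lsum_plus, <- lsum_minus.
    apply lsum_ext; intros j _. ring.
Qed.

Section Radial.
Variables (p : Z) (n : nat) (H : R -> R).
Hypothesis p_gt1 : (1 < p)%Z.
Hypothesis H_mono : forall a b, 0 <= a -> a <= b -> H a <= H b.
Hypothesis H_0 : 0 <= H 0.

Let g (xi : Qpn p n) : R := H (Qpn_norm xi).

Lemma radial_sub_sym a b : g (Qpn_sub a b) = g (Qpn_sub b a).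
Proof. unfold g. rewrite Qpn_norm_sub_sym by assumption. reflexivity. Qed.

Lemma radial_sub_ultra a b c : g (Qpn_sub a c) <= Rmax (g (Qpn_sub a b)) (g (Qpn_sub b c)).
Proof.
  unfold g. eapply Rle_trans; [apply H_mono; [apply Qpn_norm_nonneg | apply Qpn_norm_sub_ultra, p_gt1]|].
  apply Rmax_case_strong; intros; [apply Rmax_l | apply Rmax_r].
Qed.

(* Adjoin the point [0] with weight [- sum u]: the total weight vanishes, and [g] is an
   ultrametric kernel, so the quadratic form of [g (x_i - x_j)] on the enlarged family is
   non-positive; expanding it gives the claim. *)
Lemma radial_kform_nonneg m x (u : nat -> R) : 0 <= kform g m x (fun i j => u i * u j).
Proof.
  set (s := lsum u (seq 0 m)).
  set (y a := if Nat.eq_dec a m then Qpn_zero p n p_gt1 else x a).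
  set (w a := if Nat.eq_dec a m then - s else u a).
  set (E a b := g (Qpn_sub (y a) (y b))).
  assert (Hlt : forall a, In a (seq 0 m) -> a <> m) by (intros a Ha; apply in_seq in Ha; lia).
  assert (Hq : qform E w (m :: seq 0 m) <= 0).
  { apply qform_ultrametric_nonpos.
    - intros a b. apply radial_sub_sym.
    - constructor; [intros Hm; apply (Hlt m Hm); reflexivity | apply seq_NoDup].
    - intros a b c _ _ _. apply radial_sub_ultra.
    - simpl. unfold w at 1. destruct (Nat.eq_dec m m) as [_|]; [|contradiction].
      rewrite (lsum_ext w u); [unfold s; ring|].
      intros a Ha. unfold w. destruct (Nat.eq_dec a m); [contradiction (Hlt a Ha) | reflexivity]. }
  rewrite qform_cons in Hq by (intros; apply radial_sub_sym).
  assert (Hym : y m = Qpn_zero p n p_gt1)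
    by (unfold y; destruct (Nat.eq_dec m m); [reflexivity | contradiction]).
  assert (Hwm : w m = - s) by (unfold w; destruct (Nat.eq_dec m m); [reflexivity | contradiction]).
  assert (Hy : forall a, In a (seq 0 m) -> y a = x a /\ w a = u a)
    by (intros a Ha; unfold y, w; destruct (Nat.eq_dec a m); [contradiction (Hlt a Ha) | auto]).
  assert (Hrow : lsum (fun b => E m b * w b) (seq 0 m) = lsum (fun b => g (x b) * u b) (seq 0 m)).
  { apply lsum_ext. intros b Hb. unfold E. destruct (Hy b Hb) as [-> ->]. rewrite Hym, radial_sub_sym.
    rewrite Qpn_sub_zero_r. reflexivity. }
  assert (Hqform : qform E w (seq 0 m) =
                   lsum (fun i => lsum (fun j => g (Qpn_sub (x i) (x j)) * u i * u j) (seq 0 m)) (seq 0 m)).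
  { apply lsum_ext. intros i Hi. apply lsum_ext. intros j Hj. unfold E.
    destruct (Hy i Hi) as [-> ->], (Hy j Hj) as [-> ->]. reflexivity. }
  assert (HEmm : 0 <= E m m)
    by (unfold E, g; eapply Rle_trans; [exact H_0 | apply H_mono; [lra | apply Qpn_norm_nonneg]]).
  unfold kform, kern. rewrite (lsum2_kern_split (fun i => g (x i)) (fun i j => g (Qpn_sub (x i) (x j)))).
  rewrite Hrow, Hqform, Hwm in Hq. fold s. nra.
Qed.

Theorem neg_def_radial : neg_def (fun xi : Qpn p n => RtoC (H (Qpn_norm xi))).
Proof.
  apply (neg_def_real_iff g). intros m x lam. split.
  - apply lsum2_antisym. intros i j. unfold kern, im_weight.
    rewrite (radial_sub_sym (x i)). ring.
  - unfold kform.
    rewrite (lsum_ext _ (fun i => lsum (fun j => kern g x i j * (fst (lam i) * fst (lam j))) (seq 0 m)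
                               + lsum (fun j => kern g x i j * (snd (lam i) * snd (lam j))) (seq 0 m))).
    + rewrite lsum_plus. apply Rplus_le_le_0_compat; apply radial_kform_nonneg.
    + intros i _. rewrite <- lsum_plus. apply lsum_ext; intros j _. unfold re_weight. ring.
Qed.

End Radial.

Lemma radial_continuous (p : Z) (n : nat) (h : R -> R) :
  (1 < p)%Z ->
  (forall eps, 0 < eps -> exists d, 0 < d /\ forall t, 0 <= t < d -> Rabs (h t - h 0) < eps) ->
  Qpn_continuous (fun xi : Qpn p n => h (Qpn_norm xi)).
Proof.
  intros Hp Hh x eps Heps.
  destruct (Rle_lt_or_eq_dec _ _ (Qpn_norm_nonneg p n x)) as [Hx|Hx].
  - exists (Qpn_norm x). split; [assumption|]. intros y Hy.
    rewrite (Qpn_norm_eq_of_sub_lt p n Hp x y Hy), Rminus_diag, Rabs_R0. exact Heps.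
  - destruct (Hh eps Heps) as (d & Hd & Hhd). exists d. split; [assumption|]. intros y Hy.
    assert (Hle := Qpn_norm_le_max p n Hp x y). rewrite <- Hx, Rmax_left in Hle by apply Qpn_norm_nonneg.
    rewrite <- Hx. apply Hhd. split; [apply Qpn_norm_nonneg | lra].
Qed.

Section NonnegSeries.
Variables (c : nat -> R) (alpha : nat -> nat) (F : R -> R).
Hypothesis c_nonneg : forall j, (1 <= j)%nat -> 0 <= c j.
Hypothesis F_sum : forall y, 0 <= y -> infinite_sum (fun j => c (S j) * y ^ alpha (S j)) (F y).

Let partial (y : R) (N : nat) : R := sum_f_R0 (fun j => c (S j) * y ^ alpha (S j)) N.

Lemma series_mono a b : 0 <= a -> a <= b -> F a <= F b.
Proof.
  intros Ha Hab. apply (Rle_cv_lim (Un := partial a) (Vn := partial b)); [|apply F_sum; lra..].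
  intros N. apply sum_Rle. intros j _.
  apply Rmult_le_compat_l; [apply c_nonneg; lia | apply pow_incr; lra].
Qed.

(* Termwise: on [0, 1], [c t^a <= c t] when [a >= 1], and the term is constant when [a = 0]. *)
Lemma series_increment_le t : 0 <= t <= 1 -> F t - F 0 <= t * (F 1 - F 0).
Proof.
  intros Ht.
  apply (Rle_cv_lim (Un := fun N => partial t N - partial 0 N)
                    (Vn := fun N => t * (partial 1 N - partial 0 N))).
  - intros N. unfold partial. rewrite <- !minus_sum, scal_sum. apply sum_Rle. intros j _.
    assert (0 <= c (S j)) by (apply c_nonneg; lia).
    destruct (alpha (S j)) as [|a]; simpl; [lra|].
    rewrite pow1.
    assert (t ^ a <= 1) by (rewrite <- (pow1 a); apply pow_incr; lra).
    assert (0 <= c (S j) * t) by nra.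
    nra.
  - apply CV_minus; apply F_sum; lra.
  - apply CV_mult; [apply Un_cv_const | apply CV_minus; apply F_sum; lra].
Qed.

Lemma series_right_continuous :
  forall eps, 0 < eps -> exists d, 0 < d /\ forall t, 0 <= t < d -> Rabs (F t - F 0) < eps.
Proof.
  intros eps Heps. set (C := F 1 - F 0).
  assert (HC : 0 <= C) by (assert (F 0 <= F 1) by (apply series_mono; lra); unfold C; lra).
  exists (Rmin 1 (eps / (C + 1))). split; [apply Rmin_pos; [lra | apply Rdiv_lt_0_compat; lra]|].
  intros t [Ht0 Ht].
  assert (Ht1 : t <= 1) by (generalize (Rmin_l 1 (eps / (C + 1))); lra).
  assert (Hte : t * (C + 1) < eps).
  { apply (Rmult_lt_compat_r (C + 1)) in Ht; [|lra].
    eapply Rlt_le_trans; [exact Ht|]. apply Rle_trans with (eps / (C + 1) * (C + 1)).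
    - apply Rmult_le_compat_r; [lra | apply Rmin_r].
    - right. field. lra. }
  assert (F 0 <= F t) by (apply series_mono; lra).
  assert (F t - F 0 <= t * C) by (apply series_increment_le; lra).
  rewrite Rabs_pos_eq by lra. nra.
Qed.

End NonnegSeries.

Lemma iter_exp_mono k a b : a <= b -> Nat.iter k exp a <= Nat.iter k exp b.
Proof.
  induction k as [|k IH]; simpl; intros Hab; [assumption|].
  destruct (Rle_lt_or_eq_dec _ _ (IH Hab)) as [Hlt | ->]; [left; apply exp_increasing, Hlt | lra].
Qed.

Lemma iter_exp_continuous k : continuity (Nat.iter k exp).
Proof.
  induction k as [|k IH].
  - exact (derivable_continuous id derivable_id).
  - exact (continuity_comp (Nat.iter k exp) exp IH (derivable_continuous exp derivable_exp)).
Qed.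

Lemma continuous_comp_right (G F : R -> R) :
  continuity_pt G (F 0) ->
  (forall eps, 0 < eps -> exists d, 0 < d /\ forall t, 0 <= t < d -> Rabs (F t - F 0) < eps) ->
  forall eps, 0 < eps -> exists d, 0 < d /\ forall t, 0 <= t < d -> Rabs (G (F t) - G (F 0)) < eps.
Proof.
  intros HG HF eps Heps.
  destruct (HG eps Heps) as (a & Ha & HGa).
  destruct (HF a Ha) as (d & Hd & HFd). exists d. split; [assumption|]. intros t Ht.
  destruct (Req_dec (F t) (F 0)) as [->|Hne]; [rewrite Rminus_diag, Rabs_R0; exact Heps|].
  apply (HGa (F t)). split; [split; [exact I | congruence] | apply HFd, Ht].
Qed.

Theorem iter_exp_radial_series (p : Z) (n : nat) (c : nat -> R) (alpha : nat -> nat) (F : R -> R)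
    (k : nat) :
  (1 < p)%Z -> (forall j, (1 <= j)%nat -> 0 <= c j) ->
  (forall y, 0 <= y -> infinite_sum (fun j => c (S j) * y ^ alpha (S j)) (F y)) ->
  (1 <= k)%nat ->
  Qpn_continuous (fun xi : Qpn p n => Nat.iter k exp (F (Qpn_norm xi))) /\
  neg_def (fun xi : Qpn p n => RtoC (Nat.iter k exp (F (Qpn_norm xi)))).
Proof.
  intros Hp Hc HF Hk. split.
  - apply (radial_continuous p n (fun t => Nat.iter k exp (F t)) Hp).
    apply continuous_comp_right;
      [apply iter_exp_continuous | apply (series_right_continuous c alpha); assumption].
  - apply (neg_def_radial p n (fun t => Nat.iter k exp (F t)) Hp).
    + intros a b Ha Hab. apply iter_exp_mono, (series_mono c alpha); assumption.
    + destruct k as [|k]; [lia|]. left. apply exp_pos.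
Qed.

Theorem lemma3p1 :
  (forall (p : Z) (n : nat) (psi : Qpn p n -> Cplx),
     prime p ->
     neg_def psi ->
     (forall j : nat, neg_def (fun xi => Cpow (psi xi) j)) ->
     neg_def (fun xi => Cexp (psi xi)))
  /\
  (forall (p : Z) (n : nat) (c : nat -> R) (alpha : nat -> nat) (F : R -> R),
     prime p ->
     (forall j : nat, (1 <= j)%nat -> 0 <= c j) ->
     (forall y : R, 0 <= y ->
        infinite_sum (fun j => c (S j) * y ^ alpha (S j)) (F y)) ->
     (exists y1 y2 : R, 0 <= y1 /\ 0 <= y2 /\ F y1 <> F y2) ->
     forall k : nat, (1 <= k)%nat ->
       let psi0 := fun xi : Qpn p n => F (Qpn_norm xi) in
       let f := fun xi : Qpn p n => Nat.iter k exp (psi0 xi) in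
       Qpn_continuous f /\ neg_def (fun xi => RtoC (f xi))).
Proof.
  split.
  - intros p n psi Hp _ Hpow.
    apply neg_def_exp; [apply prime_ge_2 in Hp; lia | exact Hpow].
  - intros p n c alpha F Hp Hc HF _ k Hk psi0 f.
    apply (iter_exp_radial_series p n c alpha F k); [apply prime_ge_2 in Hp; lia | assumption..].
Qed.
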